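(* Let $\mathcal C$ be a weakly fusion category over an algebraically closed field $k$ and let $X$ be a simple object of $\mathcal C$. Consider the morphisms $$\Phi_1:=(e_{{}^*X}\otimes \mathrm{id}_{X^*})\circ(\mathrm{id}_{{}^*X}\otimes \mathrm{coev}_X):\ {}^*X\to {}^*X\otimes X\otimes X^*\to X^*,$$ $$\Phi_2:=(\mathrm{id}_X\otimes e_{X^*})\circ(\mathrm{coev}_X\otimes \mathrm{id}_{X^{**}}):\ X^{**}\to X\otimes X^*\otimes X^{**}\to X$$ (suppressing associativity and unit constraints). Then the following are equivalent: (i) $X$ has a rigid left dual; (ii) $\Phi_1$ is an isomorphism (equivalently, $\Phi_1\neq 0$); (iii) $\Phi_2$ is an isomorphism (equivalently, $\Phi_2\neq 0$).
   Context: A monoidal r-category is a monoidal category $(\mathcal C,\otimes,\mathbf 1)$ such that for each object $X$ the functor $Y\mapsto\mathrm{Hom}(\mathbf 1,X\otimes Y)$ is representable by an object $X^*$ (natural isomorphisms $\mathrm{Hom}(\mathbf 1,X\otimes Y)\cong \mathrm{Hom}(X^*,Y)$), and $X\mapsto X^*$ is an equivalence $\mathcal C\to\mathcal C^{\mathrm{op}}$ with inverse $X\mapsto{}^*X$ (so $({}^*X)^*\cong X$). A weakly fusion category over $k$ is a finite semisimple $k$-linear abelian monoidal r-category whose unit $\mathbf 1$ is simple. The canonical coevaluation $\mathrm{coev}_Y:\mathbf 1\to Y\otimes Y^*$ corresponds to $\mathrm{id}_{Y^*}$ under $\mathrm{Hom}(\mathbf 1,Y\otimes Y^* )\cong\mathrm{Hom}(Y^*,Y^*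 )$. For a simple object $Y$, the object $\mathbf 1$ occurs with multiplicity one in $Y\otimes Y^*$, and $e_Y:Y\otimes Y^*\to\mathbf 1$ denotes the unique morphism with $e_Y\circ \mathrm{coev}_Y=\mathrm{id}_{\mathbf 1}$; in particular $e_{{}^*X}:{}^*X\otimes X\to\mathbf 1$ and $e_{X^*}:X^*\otimes X^{**}\to\mathbf 1$. An object $X$ has a rigid left dual if there are an object $X'$ and morphisms $c:\mathbf 1\to X\otimes X'$, $d:X'\otimes X\to \mathbf 1$ with $(\mathrm{id}_X\otimes d)\circ(c\otimes\mathrm{id}_X)=\mathrm{id}_X$ and $(d\otimes\mathrm{id}_{X'})\circ(\mathrm{id}_{X'}\otimes c)=\mathrm{id}_{X'}$ (equivalently, $X'\otimes(-)$ is left adjoint to $X\otimes(-)$). *)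

From HB Require Import structures.
From mathcomp Require Import all_boot all_algebra.
From Stdlib Require Import ClassicalEpsilon.
Set Implicit Arguments. Unset Strict Implicit. Unset Printing Implicit Defensive.
Import GRing.Theory.
Local Open Scope ring_scope.

Record LinCat (k : fieldType) := LinCat_ {
  ob :> Type;
  hom : ob -> ob -> lmodType k;
  idm : forall X, hom X X;
  comp : forall X Y Z, hom Y Z -> hom X Y -> hom X Z;
  comp1m : forall X Y (f : hom X Y), comp (idm Y) f = f;
  compm1 : forall X Y (f : hom X Y), comp f (idm X) = f;
  compA : forall W X Y Z (h : hom Y Z) (g : hom X Y) (f : hom W X),
      comp h (comp g f) = comp (comp h g) f;
  comp_linl : forall X Y Z (a : k) (g g' : hom Y Z) (f : hom X Y),
      comp (a *: g + g') f = a *: comp g f + comp g' f;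
  comp_linr : forall X Y Z (a : k) (g : hom Y Z) (f f' : hom X Y),
      comp g (a *: f + f') = a *: comp g f + comp g f'
}.

Notation "g \oc f" := (comp g f) (at level 40, left associativity).

Section Basic.
Variables (k : fieldType) (C : LinCat k).

Definition is_iso (X Y : C) (f : hom X Y) :=
  exists g : hom Y X, g \oc f = idm X /\ f \oc g = idm Y.
Definition iso_ob (X Y : C) := exists f : hom X Y, is_iso f.
Definition is_zero_ob (Z : C) := idm Z = 0.
Definition mono (X Y : C) (f : hom X Y) :=
  forall (W : C) (g h : hom W X), f \oc g = f \oc h -> g = h.
Definition epi (X Y : C) (f : hom X Y) :=
  forall (W : C) (g h : hom Y W), g \oc f = h \oc f -> g = h.
Definition is_kernel (X Y : C) (f : hom X Y) (K : C) (i : hom K X) :=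
  f \oc i = 0 /\
  forall (W : C) (g : hom W X), f \oc g = 0 -> exists! h : hom W K, i \oc h = g.
Definition is_cokernel (X Y : C) (f : hom X Y) (Q : C) (q : hom Y Q) :=
  q \oc f = 0 /\
  forall (W : C) (g : hom Y W), g \oc f = 0 -> exists! h : hom Q W, h \oc q = g.
Definition is_biproduct (X1 X2 S : C) (i1 : hom X1 S) (i2 : hom X2 S)
    (p1 : hom S X1) (p2 : hom S X2) :=
  [/\ p1 \oc i1 = idm X1, p2 \oc i2 = idm X2, p1 \oc i2 = 0, p2 \oc i1 = 0
    & i1 \oc p1 + i2 \oc p2 = idm S].

(* abelian (the k-linear structure is the additive structure) *)
Definition abelian : Prop :=
     (exists Z : C, is_zero_ob Z)
  /\ (forall X1 X2 : C, exists (S : C) (i1 : hom X1 S) (i2 : hom X2 S)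
          (p1 : hom S X1) (p2 : hom S X2), is_biproduct i1 i2 p1 p2)
  /\ (forall (X Y : C) (f : hom X Y), exists (K : C) (i : hom K X), is_kernel f i)
  /\ (forall (X Y : C) (f : hom X Y), exists (Q : C) (q : hom Y Q), is_cokernel f q)
  /\ (forall (X Y : C) (f : hom X Y), mono f ->
          exists (Q : C) (q : hom Y Q), is_kernel q f)
  /\ (forall (X Y : C) (f : hom X Y), epi f ->
          exists (K : C) (i : hom K X), is_cokernel i f).

Definition simple (X : C) :=
  ~ is_zero_ob X /\
  forall (A : C) (m : hom A X), mono m -> is_zero_ob A \/ is_iso m.

Definition semisimple_ob (X : C) :=
  exists (n : nat) (S : 'I_n -> C) (i : forall j, hom (S j) X)
         (p : forall j, hom X (S j)),
    [/\ (forall j, simple (S j)),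
        (forall j, p j \oc i j = idm (S j)),
        (forall j j', j != j' -> p j' \oc i j = 0)
      & \sum_(j < n) (i j \oc p j) = idm X].

Definition finite_semisimple : Prop :=
  [/\ (forall X : C, semisimple_ob X),
      (exists (n : nat) (S : 'I_n -> C),
        forall X : C, simple X -> exists j, iso_ob X (S j))
    & (forall X Y : C, exists (n : nat) (b : 'I_n -> hom X Y),
        forall f : hom X Y, exists c : 'I_n -> k, f = \sum_(j < n) c j *: b j)].
End Basic.

Record MonCat (k : fieldType) := MonCat_ {
  mC :> LinCat k;
  ten : mC -> mC -> mC;
  tenm : forall X X' Y Y' : mC, hom X X' -> hom Y Y' -> hom (ten X Y) (ten X' Y');
  one : mC;
  asc : forall X Y Z : mC, hom (ten (ten X Y) Z) (ten X (ten Y Z));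
  asci : forall X Y Z : mC, hom (ten X (ten Y Z)) (ten (ten X Y) Z);
  lu : forall X : mC, hom (ten one X) X;
  lui : forall X : mC, hom X (ten one X);
  ru : forall X : mC, hom (ten X one) X;
  rui : forall X : mC, hom X (ten X one)
}.

Section Mon.
Variables (k : fieldType) (M : MonCat k).

Definition monoidal_axioms : Prop :=
     (forall X Y : M, tenm (idm X) (idm Y) = idm (ten X Y))
  /\ (forall (X X' X'' Y Y' Y'' : M) (f : hom X X') (f' : hom X' X'')
              (g : hom Y Y') (g' : hom Y' Y''),
          tenm (f' \oc f) (g' \oc g) = tenm f' g' \oc tenm f g)
  /\ (forall (X X' Y Y' : M) (a : k) (f f' : hom X X') (g : hom Y Y'),
          tenm (a *: f + f') g = a *: tenm f g + tenm f' g)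
  /\ (forall (X X' Y Y' : M) (a : k) (f : hom X X') (g g' : hom Y Y'),
          tenm f (a *: g + g') = a *: tenm f g + tenm f g')
  /\ (forall X Y Z : M, asci X Y Z \oc asc X Y Z = idm _ /\
                         asc X Y Z \oc asci X Y Z = idm _)
  /\ (forall (X X' Y Y' Z Z' : M) (f : hom X X') (g : hom Y Y') (h : hom Z Z'),
          asc X' Y' Z' \oc tenm (tenm f g) h = tenm f (tenm g h) \oc asc X Y Z)
  /\ (forall X : M, lui X \oc lu X = idm _ /\ lu X \oc lui X = idm X)
  /\ (forall X : M, rui X \oc ru X = idm _ /\ ru X \oc rui X = idm X)
  /\ (forall (X Y : M) (f : hom X Y),
          lu Y \oc tenm (idm (one M)) f = f \oc lu X)
  /\ (forall (X Y : M) (f : hom X Y),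
          ru Y \oc tenm f (idm (one M)) = f \oc ru X)
  /\ (forall W X Y Z : M,
          asc W X (ten Y Z) \oc asc (ten W X) Y Z =
          tenm (idm W) (asc X Y Z) \oc asc W (ten X Y) Z \oc tenm (asc W X Y) (idm Z))
  /\ (forall X Y : M,
          tenm (idm X) (lu Y) \oc asc X (one M) Y = tenm (ru X) (idm Y)).

Definition has_rigid_left_dual (X : M) :=
  exists (X' : M) (c : hom (one M) (ten X X')) (d : hom (ten X' X) (one M)),
    ru X \oc tenm (idm X) d \oc asc X X' X \oc tenm c (idm X) \oc lui X = idm X /\
    lu X' \oc tenm d (idm X') \oc asci X' X X' \oc tenm (idm X') c \oc rui X' = idm X'.
End Mon.

(* dual X = X^*, with rpsi/rphi the natural bijections
   Hom(X^*, Y) <-> Hom(1, X (x) Y); lstar X = ^*X with eta X : (^*X)^* ~ X. *)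
Record RData (k : fieldType) (M : MonCat k) := RData_ {
  dual : M -> M;
  rphi : forall X Y : M, hom (one M) (ten X Y) -> hom (dual X) Y;
  rpsi : forall X Y : M, hom (dual X) Y -> hom (one M) (ten X Y);
  lstar : M -> M;
  eta : forall X : M, hom (dual (lstar X)) X;
  etai : forall X : M, hom X (dual (lstar X))
}.

Section R.
Variables (k : fieldType) (M : MonCat k) (R : RData M).

Definition coev (Y : M) : hom (one M) (ten Y (dual R Y)) :=
  @rpsi _ _ R Y (dual R Y) (idm (dual R Y)).

(* action of X |-> X^* on morphisms (induced via Yoneda) *)
Definition dualm (X X' : M) (f : hom X X') : hom (dual R X') (dual R X) :=
  @rphi _ _ R X' (dual R X) (tenm f (idm (dual R X)) \oc coev X).

Definition rcat_axioms : Prop :=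
  [/\ (forall (X Y : M) (u : hom (one M) (ten X Y)), @rpsi _ _ R X Y (@rphi _ _ R X Y u) = u),
      (forall (X Y : M) (g : hom (dual R X) Y), @rphi _ _ R X Y (@rpsi _ _ R X Y g) = g),
      (forall (X Y Y' : M) (g : hom Y Y') (u : hom (one M) (ten X Y)),
          @rphi _ _ R X Y' (tenm (idm X) g \oc u) = g \oc @rphi _ _ R X Y u),
      (forall X X' : M, bijective (@dualm X X'))
    & (* essentially surjective, with inverse X |-> ^*X *)
      (forall X : M, @etai _ _ R X \oc @eta _ _ R X = idm _ /\ @eta _ _ R X \oc @etai _ _ R X = idm X)].

Definition ev (Y : M) : hom (ten Y (dual R Y)) (one M) :=
  epsilon (inhabits 0)
    (fun e : hom (ten Y (dual R Y)) (one M) => e \oc coev Y = idm (one M)).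
End R.

Record WeaklyFusion (k : fieldType) := WeaklyFusion_ {
  wM :> MonCat k;
  wR : RData wM;
  wf_abelian : abelian wM;
  wf_finss : finite_semisimple wM;
  wf_monoidal : monoidal_axioms wM;
  wf_rcat : rcat_axioms wR;
  wf_unit_simple : simple (one wM)
}.

Section Phi.
Variables (k : fieldType) (C : WeaklyFusion k) (X : C).
Let R := wR C.
Let Y := lstar R X.

Definition e_lstar : hom (ten Y X) (one C) :=
  ev R Y \oc tenm (idm Y) (etai R X).

Definition Phi1 : hom (lstar R X) (dual R X) :=
  lu (dual R X) \oc tenm e_lstar (idm (dual R X)) \oc asci Y X (dual R X)
    \oc tenm (idm Y) (coev R X) \oc rui Y.

Definition Phi2 : hom (dual R (dual R X)) X :=
  ru X \oc tenm (idm X) (ev R (dual R X)) \oc asc X (dual R X) (dual R (dual R X))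
    \oc tenm (coev R X) (idm (dual R (dual R X))) \oc lui (dual R (dual R X)).
End Phi.

(* Given coev_X : 1 -> X (x) X^*, a pairing d : X^* (x) X -> 1 yields two
   snake composites zig d : X -> X and zag d : X^* -> X^*, and snakes slide
   across a tensor square: h2 o (zag h1 (x) id) = h1 o (id (x) zig h2).
   Sliding makes zag d idempotent once zig d = id, and vice versa; as X and
   X^* are simple, idempotents are 0 or id, so X is rigid as soon as one
   snake identity holds for some d.  Since Phi1 = zag e_{*X} and
   Phi2 = zig e_{X^*}, an inverse of Phi1 (resp. Phi2) twists the pairing into
   such a d.  Conversely, for a d satisfying both identities, sliding writes
   the nonzero maps e_{*X} and e_{X^*} (they split coevaluations) as composites
   through Phi1 and Phi2, so these are nonzero, hence isomorphisms between
   simple objects by Schur's lemma. *)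
From Pilot Require Import Defs.
From HB Require Import structures.
From mathcomp Require Import all_boot all_algebra.
From Stdlib Require Import ClassicalEpsilon.
(* Re-imported after mathcomp so that [hom] refers to Defs, not to vector.v. *)
Import Defs.
Set Implicit Arguments. Unset Strict Implicit. Unset Printing Implicit Defensive.
Import GRing.Theory.
Local Open Scope ring_scope.

Section LinCatTheory.
Variables (k : fieldType) (C : LinCat k).
Implicit Types X Y Z W U V A B P Q S K : C.

Lemma comp0m X Y Z (f : hom X Y) : (0 : hom Y Z) \oc f = 0.
Proof.
have H := comp_linl 1 (0 : hom Y Z) 0 f.
rewrite !scale1r addr0 in H.
by apply: (addrI ((0 : hom Y Z) \oc f)); rewrite addr0 -H.
Qed.

Lemma compm0 X Y Z (g : hom Y Z) : g \oc (0 : hom X Y) = 0.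
Proof.
have H := comp_linr 1 g (0 : hom X Y) 0.
rewrite !scale1r addr0 in H.
by apply: (addrI (g \oc (0 : hom X Y))); rewrite addr0 -H.
Qed.

Lemma compDl X Y Z (g g' : hom Y Z) (f : hom X Y) :
  (g + g') \oc f = g \oc f + g' \oc f.
Proof. by have := comp_linl 1 g g' f; rewrite !scale1r. Qed.

Lemma compBr X Y Z (g : hom Y Z) (f f' : hom X Y) :
  g \oc (f - f') = g \oc f - g \oc f'.
Proof. by rewrite addrC -scaleN1r comp_linr scaleN1r addrC. Qed.

Lemma comp_suml X Y Z n (F : 'I_n -> hom Y Z) (f : hom X Y) :
  (\sum_(j < n) F j) \oc f = \sum_(j < n) (F j \oc f).
Proof.
apply: (big_morph (fun g : hom Y Z => g \oc f)) => [g g'|]; first by rewrite compDl.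
by rewrite comp0m.
Qed.

Lemma zero_ob_hom_to X Y (X0 : is_zero_ob X) (u : hom Y X) : u = 0.
Proof. by rewrite -(comp1m u) X0 comp0m. Qed.

Lemma kernel_mono X Y (f : hom X Y) K (i : hom K X) : is_kernel f i -> mono i.
Proof.
move=> [fi0 ker_i] W g h eq_ig_ih.
have fig0 : f \oc (i \oc g) = 0 by rewrite compA fi0 comp0m.
have [x [_ x_uniq]] := ker_i W _ fig0.
by rewrite -(x_uniq g erefl) (x_uniq h (esym eq_ig_ih)).
Qed.

Lemma kernel0_mono X Y (f : hom X Y) K (i : hom K X) :
  is_kernel f i -> is_zero_ob K -> mono f.
Proof.
move=> [_ ker_i] K0 W g h eq_fg_fh.
have fgh0 : f \oc (g - h) = 0 by rewrite compBr eq_fg_fh subrr.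
have [x [ix _]] := ker_i W _ fgh0.
by apply/eqP; rewrite -subr_eq0 -ix (zero_ob_hom_to K0 x) compm0.
Qed.

Lemma mono_comp X Y Z (f : hom Y Z) (g : hom X Y) :
  mono f -> mono g -> mono (f \oc g).
Proof. by move=> mf mg W u v; rewrite -!compA => /mf /mg. Qed.

Lemma retraction_mono X Y (f : hom X Y) (g : hom Y X) : g \oc f = idm X -> mono f.
Proof. by move=> gf W u v e; rewrite -(comp1m u) -(comp1m v) -gf -!compA e. Qed.

Lemma comp_cancel_r X Y Z (h : hom X Y) (h' : hom Y X) (f g : hom Y Z) :
  h \oc h' = idm Y -> f \oc h = g \oc h -> f = g.
Proof. by move=> hh' e; rewrite -(compm1 f) -(compm1 g) -hh' !compA e. Qed.

Lemma comp_cancel_l X Y Z (h : hom Y Z) (h' : hom Z Y) (f g : hom X Y) :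
  h' \oc h = idm Y -> h \oc f = h \oc g -> f = g.
Proof. by move=> h'h e; rewrite -(comp1m f) -(comp1m g) -h'h -!compA e. Qed.

Lemma natural_inv P Q P' Q' (a : hom P Q) (a' : hom Q P) (b : hom P' Q')
    (b' : hom Q' P') (F : hom P P') (G : hom Q Q') :
  a \oc a' = idm Q -> b' \oc b = idm P' -> b \oc F = G \oc a -> b' \oc G = F \oc a'.
Proof.
move=> aa' b'b e.
by rewrite -(compm1 (b' \oc G)) -aa' !compA -(compA b' G) -e compA b'b comp1m.
Qed.

Lemma comp2_ctx X Y Z (p : hom Y Z) (q : hom X Y) (r : hom X Z) :
  p \oc q = r -> forall V (h : hom Z V), h \oc p \oc q = h \oc r.
Proof. by move=> <- V h; rewrite compA. Qed.

Lemma comp3_ctx X Y Z W (p : hom Z W) (q : hom Y Z) (s : hom X Y) (r : hom X W) :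
  p \oc q \oc s = r -> forall V (h : hom W V), h \oc p \oc q \oc s = h \oc r.
Proof. by move=> <- V h; rewrite !compA. Qed.

Lemma comp4_ctx X Y Z W U (p : hom W U) (p' : hom Z W) (q : hom Y Z) (s : hom X Y)
    (r : hom X U) :
  p \oc p' \oc q \oc s = r ->
  forall V (h : hom U V), h \oc p \oc p' \oc q \oc s = h \oc r.
Proof. by move=> <- V h; rewrite !compA. Qed.

Hypothesis abelianC : abelian C.

Lemma schur A B (f : hom A B) : simple A -> simple B -> f != 0 -> is_iso f.
Proof.
move=> [nA subA] [_ subB] f_neq0.
have [_ [_ [has_kernel _]]] := abelianC.
have [K [i ker_i]] := has_kernel _ _ f.
case: (subA K i (kernel_mono ker_i)) => [K0 | [g [_ ig]]].
  by case: (subB A f (kernel0_mono ker_i K0)).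
by move: f_neq0; rewrite -(compm1 f) -ig compA ker_i.1 comp0m eqxx.
Qed.

Lemma simple_idem Z (e : hom Z Z) : simple Z -> e \oc e = e -> e = 0 \/ e = idm Z.
Proof.
move=> [_ subZ] ee.
have [_ [_ [has_kernel _]]] := abelianC.
have [K [i ker_i]] := has_kernel _ _ e.
case: (subZ K i (kernel_mono ker_i)) => [K0 | [g [_ ig]]].
  by right; apply: (kernel0_mono ker_i K0); rewrite ee compm1.
by left; rewrite -(compm1 e) -ig compA ker_i.1 comp0m.
Qed.

Lemma iso_simple S Z (i : hom S Z) (p : hom Z S) :
  simple S -> p \oc i = idm S -> i \oc p = idm Z -> simple Z.
Proof.
move=> [nS subS] pi ip; split.
  by move=> Z0; apply: nS; rewrite /is_zero_ob -pi -(comp1m i) Z0 comp0m compm0.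
move=> A m mm.
have mpm : mono (p \oc m) by apply: mono_comp => //; apply: retraction_mono ip.
case: (subS A _ mpm) => [A0 | [q [qpm pmq]]]; [by left | right].
exists (q \oc p); split; first by rewrite -compA.
by rewrite -(comp1m m) -ip -!compA (compA p) (compA (p \oc m)) pmq comp1m.
Qed.

Lemma idem_simple Z :
  semisimple_ob Z -> ~ is_zero_ob Z ->
  (forall e : hom Z Z, e \oc e = e -> e = 0 \/ e = idm Z) -> simple Z.
Proof.
move=> [[|n] [S [i [p [simpleS pi _ sum_ip]]]]] nZ idemZ.
  by case: nZ; rewrite /is_zero_ob -sum_ip big_ord0.
have idem_ip : (i ord0 \oc p ord0) \oc (i ord0 \oc p ord0) = i ord0 \oc p ord0.
  by rewrite compA -(compA _ (p ord0)) pi compm1.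
case: (idemZ _ idem_ip) => [ip0 |]; last exact: iso_simple (simpleS ord0) (pi ord0).
have [nS _] := simpleS ord0; case: nS; rewrite /is_zero_ob.
have -> : idm (S ord0) = p ord0 \oc (i ord0 \oc p ord0) \oc i ord0.
  by rewrite compA pi comp1m pi.
by rewrite ip0 compm0 comp0m.
Qed.

End LinCatTheory.

(* Composites are kept left-associated, so an equation [p \oc q = r] has to be
   used under a left context [h \oc p \oc q]; [rw E] (resp. [rwi E]) rewrites
   left to right (resp. right to left) with E in such a context. *)
Tactic Notation "rw" uconstr(E) :=
  first [ rewrite (comp4_ctx E) | rewrite (comp3_ctx E) | rewrite (comp2_ctx E)
        | rewrite E ]; rewrite ?compA.
Tactic Notation "rwi" uconstr(E) :=
  first [ rewrite (comp4_ctx (esym E)) | rewrite (comp3_ctx (esym E))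
        | rewrite (comp2_ctx (esym E)) | rewrite -E ]; rewrite ?compA.

Section MonoidalTheory.
Variables (k : fieldType) (M : MonCat k) (HM : monoidal_axioms M).
Implicit Types X Y Z W V U A B : M.
Notation I := (one M).

Lemma tenm11 X Y : tenm (idm X) (idm Y) = idm (ten X Y).
Proof. by case: HM. Qed.
Lemma tenmM X X' X'' Y Y' Y'' (f : hom X X') (f' : hom X' X'') (g : hom Y Y')
    (g' : hom Y' Y'') :
  tenm (f' \oc f) (g' \oc g) = tenm f' g' \oc tenm f g.
Proof. by have [_ [H _]] := HM; apply: H. Qed.
Lemma tenm_linl X X' Y Y' (a : k) (f f' : hom X X') (g : hom Y Y') :
  tenm (a *: f + f') g = a *: tenm f g + tenm f' g.
Proof. by have [_ [_ [H _]]] := HM; apply: H. Qed.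
Lemma tenm_linr X X' Y Y' (a : k) (f : hom X X') (g g' : hom Y Y') :
  tenm f (a *: g + g') = a *: tenm f g + tenm f g'.
Proof. by have [_ [_ [_ [H _]]]] := HM; apply: H. Qed.
Lemma ascK X Y Z : asci X Y Z \oc asc X Y Z = idm _.
Proof. by have [_ [_ [_ [_ [H _]]]]] := HM; case: (H X Y Z). Qed.
Lemma asciK X Y Z : asc X Y Z \oc asci X Y Z = idm _.
Proof. by have [_ [_ [_ [_ [H _]]]]] := HM; case: (H X Y Z). Qed.
Lemma asc_nat X X' Y Y' Z Z' (f : hom X X') (g : hom Y Y') (h : hom Z Z') :
  asc X' Y' Z' \oc tenm (tenm f g) h = tenm f (tenm g h) \oc asc X Y Z.
Proof. by have [_ [_ [_ [_ [_ [H _]]]]]] := HM; apply: H. Qed.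
Lemma luK X : lui X \oc lu X = idm _.
Proof. by have [_ [_ [_ [_ [_ [_ [H _]]]]]]] := HM; case: (H X). Qed.
Lemma luiK X : lu X \oc lui X = idm _.
Proof. by have [_ [_ [_ [_ [_ [_ [H _]]]]]]] := HM; case: (H X). Qed.
Lemma ruK X : rui X \oc ru X = idm _.
Proof. by have [_ [_ [_ [_ [_ [_ [_ [H _]]]]]]]] := HM; case: (H X). Qed.
Lemma ruiK X : ru X \oc rui X = idm _.
Proof. by have [_ [_ [_ [_ [_ [_ [_ [H _]]]]]]]] := HM; case: (H X). Qed.
Lemma lu_nat X Y (f : hom X Y) : lu Y \oc tenm (idm I) f = f \oc lu X.
Proof. by have [_ [_ [_ [_ [_ [_ [_ [_ [H _]]]]]]]]] := HM; apply: H. Qed.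
Lemma ru_nat X Y (f : hom X Y) : ru Y \oc tenm f (idm I) = f \oc ru X.
Proof. by have [_ [_ [_ [_ [_ [_ [_ [_ [_ [H _]]]]]]]]]] := HM; apply: H. Qed.
Lemma pentagon W X Y Z :
  asc W X (ten Y Z) \oc asc (ten W X) Y Z =
  tenm (idm W) (asc X Y Z) \oc asc W (ten X Y) Z \oc tenm (asc W X Y) (idm Z).
Proof. by have [_ [_ [_ [_ [_ [_ [_ [_ [_ [_ [H _]]]]]]]]]]] := HM; apply: H. Qed.
Lemma triangle X Y : tenm (idm X) (lu Y) \oc asc X I Y = tenm (ru X) (idm Y).
Proof. by have [_ [_ [_ [_ [_ [_ [_ [_ [_ [_ [_ H]]]]]]]]]]] := HM; apply: H. Qed.

Lemma tenmMl X X' X'' Y (f : hom X X') (f' : hom X' X'') :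
  tenm (f' \oc f) (idm Y) = tenm f' (idm Y) \oc tenm f (idm Y).
Proof. by rewrite -tenmM comp1m. Qed.
Lemma tenmMr X Y Y' Y'' (g : hom Y Y') (g' : hom Y' Y'') :
  tenm (idm X) (g' \oc g) = tenm (idm X) g' \oc tenm (idm X) g.
Proof. by rewrite -tenmM comp1m. Qed.
Lemma tenm_lr X X' Y Y' (f : hom X X') (g : hom Y Y') :
  tenm f g = tenm f (idm Y') \oc tenm (idm X) g.
Proof. by rewrite -tenmM comp1m compm1. Qed.
Lemma tenm_rl X X' Y Y' (f : hom X X') (g : hom Y Y') :
  tenm f g = tenm (idm X') g \oc tenm f (idm Y).
Proof. by rewrite -tenmM comp1m compm1. Qed.
Lemma tenm_comm X X' Y Y' (f : hom X X') (g : hom Y Y') :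
  tenm f (idm Y') \oc tenm (idm X) g = tenm (idm X') g \oc tenm f (idm Y).
Proof. by rewrite -tenm_lr -tenm_rl. Qed.

Lemma tenm0l X X' Y Y' (g : hom Y Y') : tenm (0 : hom X X') g = 0.
Proof.
have H := tenm_linl 1 (0 : hom X X') 0 g.
rewrite !scale1r addr0 in H.
by apply: (addrI (tenm (0 : hom X X') g)); rewrite addr0 -H.
Qed.
Lemma tenm0r X X' Y Y' (f : hom X X') : tenm f (0 : hom Y Y') = 0.
Proof.
have H := tenm_linr 1 f (0 : hom Y Y') 0.
rewrite !scale1r addr0 in H.
by apply: (addrI (tenm f (0 : hom Y Y'))); rewrite addr0 -H.
Qed.

Lemma asci_nat X X' Y Y' Z Z' (f : hom X X') (g : hom Y Y') (h : hom Z Z') :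
  asci X' Y' Z' \oc tenm f (tenm g h) = tenm (tenm f g) h \oc asci X Y Z.
Proof. exact: natural_inv (asciK _ _ _) (ascK _ _ _) (asc_nat _ _ _). Qed.
Lemma lui_nat X Y (f : hom X Y) : lui Y \oc f = tenm (idm I) f \oc lui X.
Proof. exact: natural_inv (luiK _) (luK _) (lu_nat _). Qed.
Lemma rui_nat X Y (f : hom X Y) : rui Y \oc f = tenm f (idm I) \oc rui X.
Proof. exact: natural_inv (ruiK _) (ruK _) (ru_nat _). Qed.

Lemma tenm1l_inj X Y (f g : hom X Y) : tenm (idm I) f = tenm (idm I) g -> f = g.
Proof. by move=> e; apply: (comp_cancel_r (luiK X)); rewrite -!lu_nat e. Qed.
Lemma tenm1r_inj X Y (f g : hom X Y) : tenm f (idm I) = tenm g (idm I) -> f = g.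
Proof. by move=> e; apply: (comp_cancel_r (ruiK X)); rewrite -!ru_nat e. Qed.

Lemma lu_ten1 X : lu (ten I X) = tenm (idm I) (lu X).
Proof. by apply: (comp_cancel_l (luK X)); rewrite lu_nat. Qed.

(* Kelly's coherence consequences of the pentagon and triangle axioms. *)
Lemma lu_asc A B : lu (ten A B) \oc asc I A B = tenm (lu A) (idm B).
Proof.
apply: tenm1l_inj.
apply: (comp_cancel_r (h := asc I (ten I A) B \oc tenm (asc I I A) (idm B))
                      (h' := tenm (asci I I A) (idm B) \oc asci I (ten I A) B)).
  by rewrite -compA (compA (tenm _ _)) -tenmM asciK comp1m tenm11 comp1m asciK.
rewrite tenmMr !compA.
rwi (pentagon I I A B).
rw (triangle I (ten A B)).
rewrite -(tenm11 A B).
rwi (asc_nat (ru I) (idm A) (idm B)).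
rewrite -(triangle I A) tenmMl !compA.
by rw (asc_nat (idm I) (lu A) (idm B)).
Qed.

Lemma asc_ru A B : tenm (idm A) (ru B) \oc asc A B I = ru (ten A B).
Proof.
apply: tenm1r_inj.
apply: (comp_cancel_l (ascK A B I)).
rewrite -(triangle (ten A B) I) tenmMl ?compA.
rw (asc_nat (idm A) (ru B) (idm I)).
rewrite -(triangle B I) tenmMr ?compA.
rwi (pentagon A B I I).
rewrite -(tenm11 A B).
by rw (asc_nat (idm A) (idm B) (lu I)).
Qed.

Lemma lu1_ru1 : lu I = ru I.
Proof. by apply: tenm1r_inj; rewrite -lu_asc -triangle lu_ten1. Qed.

Lemma tenm1_ru A B : tenm (idm A) (ru B) = ru (ten A B) \oc asci A B I.
Proof. by rewrite -asc_ru -compA asciK compm1. Qed.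

Lemma triangle_inv A B : asc A I B \oc tenm (rui A) (idm B) = tenm (idm A) (lui B).
Proof.
apply: (comp_cancel_l (h := tenm (idm A) (lu B)) (h' := tenm (idm A) (lui B))).
  by rewrite -tenmMr luK tenm11.
by rewrite compA triangle -tenmMl ruiK tenm11 -tenmMr luiK tenm11.
Qed.

End MonoidalTheory.

Section ZigZag.
Variables (k : fieldType) (M : MonCat k) (HM : monoidal_axioms M).
Implicit Types A B : M.
Notation I := (one M).
Variables (X X' : M) (c : hom I (ten X X')).

Definition zig B (h : hom (ten X' B) I) : hom B X :=
  ru X \oc tenm (idm X) h \oc asc X X' B \oc tenm c (idm B) \oc lui B.
Definition zag A (h : hom (ten A X) I) : hom A X' :=
  lu X' \oc tenm h (idm X') \oc asci A X X' \oc tenm (idm A) c \oc rui A.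

Lemma rigid_left_dual_zigzag (d : hom (ten X' X) I) :
  zig d = idm X -> zag d = idm X' -> has_rigid_left_dual X.
Proof. by move=> zig1 zag1; exists X', c, d. Qed.

Lemma zigzag_middle A B :
  asc (ten A X) X' B \oc tenm (asci A X X') (idm B) \oc tenm (tenm (idm A) c) (idm B)
    \oc tenm (rui A) (idm B) =
  asci A X (ten X' B) \oc tenm (idm A) (asc X X' B) \oc tenm (idm A) (tenm c (idm B))
    \oc tenm (idm A) (lui B).
Proof.
apply: (comp_cancel_l (ascK HM A X (ten X' B))).
rewrite ?compA asciK // comp1m.
rw (pentagon HM A X X' B).
rwi (@tenmMl _ _ HM _ _ _ B (asci A X X') (asc A X X')).
rewrite asciK // tenm11 // compm1.
rw (asc_nat HM (idm A) c (idm B)).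
by rw (triangle_inv HM A B).
Qed.

Lemma zigzag_slide A B (h1 : hom (ten A X) I) (h2 : hom (ten X' B) I) :
  h2 \oc tenm (zag h1) (idm B) = h1 \oc tenm (idm A) (zig h2).
Proof.
rewrite /zag /zig !(tenmMl HM) !(tenmMr HM) ?compA.
rewrite -(lu_asc HM) ?compA.
rw (esym (lu_nat HM h2)).
rw (asc_nat HM h1 (idm X') (idm B)).
rewrite tenm11 //.
rwi (tenm_rl HM h1 h2).
rewrite tenm1_ru ?compA //.
rw (esym (ru_nat HM h1)).
rw (asci_nat HM (idm A) (idm X) h2).
rewrite tenm11 //.
rwi (tenm_lr HM h1 h2).
rewrite (lu1_ru1 HM).
by rw (zigzag_middle A B).
Qed.

Lemma zag_natural A A' (u : hom A' A) (h : hom (ten A X) I) :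
  zag (h \oc tenm u (idm X)) = zag h \oc u.
Proof.
rewrite /zag (tenmMl HM) ?compA.
rwi (asci_nat HM u (idm X) (idm X')).
rewrite tenm11 //.
rw (tenm_comm HM u c).
by rwi (rui_nat HM u).
Qed.

Lemma zig_natural B B' (v : hom B' B) (h : hom (ten X' B) I) :
  zig (h \oc tenm (idm X') v) = zig h \oc v.
Proof.
rewrite /zig (tenmMr HM) ?compA.
rwi (asc_nat HM (idm X) (idm X') v).
rewrite tenm11 //.
rwi (tenm_comm HM c v).
by rwi (lui_nat HM v).
Qed.

Lemma zag0 A : zag (0 : hom (ten A X) I) = 0.
Proof. by rewrite /zag (tenm0l HM) compm0 !comp0m. Qed.
Lemma zig0 B : zig (0 : hom (ten X' B) I) = 0.
Proof. by rewrite /zig (tenm0r HM) compm0 !comp0m. Qed.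

Hypotheses (abelianM : abelian M) (simpleX : simple X) (simpleX' : simple X').

Lemma zig1_zag1 (d : hom (ten X' X) I) : zig d = idm X -> zag d = idm X'.
Proof.
move=> zig1.
have d_slide : d \oc tenm (zag d) (idm X) = d.
  by rewrite zigzag_slide zig1 tenm11 // compm1.
have : zag d \oc zag d = zag d by rewrite -zag_natural d_slide.
case/(simple_idem abelianM simpleX') => // zag_d0.
have [nX _] := simpleX; exfalso; apply: nX.
by rewrite /is_zero_ob -zig1 -d_slide zag_d0 (tenm0l HM) compm0 zig0.
Qed.

Lemma zag1_zig1 (d : hom (ten X' X) I) : zag d = idm X' -> zig d = idm X.
Proof.
move=> zag1.
have d_slide : d \oc tenm (idm X') (zig d) = d.
  by rewrite -zigzag_slide zag1 tenm11 // compm1.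
have : zig d \oc zig d = zig d by rewrite -zig_natural d_slide.
case/(simple_idem abelianM simpleX) => // zig_d0.
have [nX' _] := simpleX'; exfalso; apply: nX'.
by rewrite /is_zero_ob -zag1 -d_slide zig_d0 (tenm0r HM) compm0 zag0.
Qed.

End ZigZag.

Lemma zig_comp_coev (k : fieldType) (M : MonCat k) (HM : monoidal_axioms M)
    (X X' X'' B : M) (c : hom (one M) (ten X X'')) (a : hom X'' X')
    (h : hom (ten X' B) (one M)) :
  zig (tenm (idm X) a \oc c) h = zig c (h \oc tenm a (idm B)).
Proof.
rewrite /zig (tenmMl HM) (tenmMr HM) ?compA.
by rw (asc_nat HM (idm X) a (idm B)).
Qed.

Section RCategoryTheory.
Variables (k : fieldType) (M : MonCat k) (HM : monoidal_axioms M).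
Variables (R : RData M) (HR : rcat_axioms R).
Implicit Types X Y Z : M.
Notation I := (one M).
Local Notation "X ^*" := (dual R X).

Lemma rphiK X Y (u : hom I (ten X Y)) : rpsi (rphi R u) = u.
Proof. by case: HR => H _ _ _ _; apply: H. Qed.
Lemma rpsiK X Y (g : hom X^* Y) : rphi R (rpsi g) = g.
Proof. by case: HR => _ H _ _ _; apply: H. Qed.
Lemma rphi_nat X Y Y' (g : hom Y Y') (u : hom I (ten X Y)) :
  rphi R (tenm (idm X) g \oc u) = g \oc rphi R u.
Proof. by case: HR => _ _ H _ _; apply: H. Qed.

Lemma rpsiE X Y (g : hom X^* Y) : rpsi g = tenm (idm X) g \oc coev R X.
Proof.
have e : rphi R (tenm (idm X) g \oc coev R X) = g by rewrite rphi_nat /coev rpsiK compm1.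
by rewrite -{1}e rphiK.
Qed.

Lemma rpsi_inj X Y (g g' : hom X^* Y) : rpsi g = rpsi g' -> g = g'.
Proof. by move=> e; rewrite -(rpsiK g) e rpsiK. Qed.

Lemma rphi0 X Y : rphi R (0 : hom I (ten X Y)) = 0.
Proof.
have <- : rpsi (0 : hom X^* Y) = 0 by rewrite rpsiE (tenm0r HM) comp0m.
by rewrite rpsiK.
Qed.

Lemma dualm_id X : dualm R (idm X) = idm X^*.
Proof. by rewrite /dualm tenm11 // comp1m /coev rpsiK. Qed.

Lemma dualm0 X X' : dualm R (0 : hom X X') = 0.
Proof. by rewrite /dualm (tenm0l HM) comp0m rphi0. Qed.

Lemma dualm_comp X X' X'' (f : hom X X') (g : hom X' X'') :
  dualm R (g \oc f) = dualm R f \oc dualm R g.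
Proof.
apply: rpsi_inj.
rewrite /dualm rphiK rpsiE (tenmMr HM) -compA -rpsiE rphiK compA.
by rewrite -(tenm_comm HM) -compA -rpsiE rphiK compA -(tenmMl HM).
Qed.

Lemma coev_neq0 X : ~ is_zero_ob X^* -> coev R X != 0.
Proof.
move=> nz; apply/eqP => c0; apply: nz.
by rewrite /is_zero_ob -(rpsiK (idm X^*)) -/(coev R X) c0 rphi0.
Qed.

Hypothesis abelianM : abelian M.

Lemma dual_simple X : simple X -> (forall Z : M, semisimple_ob Z) -> simple X^*.
Proof.
move=> sX semisimpleM; have [nX _] := sX.
have [g dualmK gK] : bijective (@dualm _ _ R X X) by case: HR.
apply: idem_simple => //.
  move=> X0; apply: nX.
  by rewrite /is_zero_ob -(dualmK (idm X)) dualm_id X0 -(dualm0 X X) dualmK.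
move=> e ee; rewrite -(gK e).
have : g e \oc g e = g e by rewrite -[LHS]dualmK dualm_comp !gK ee.
by case/(simple_idem abelianM sX) => ->; [left; exact: dualm0 | right; exact: dualm_id].
Qed.

Lemma simple_of_dual X : simple X^* -> (forall Z : M, semisimple_ob Z) -> simple X.
Proof.
move=> sX semisimpleM; have [nX _] := sX.
have [g dualmK _] : bijective (@dualm _ _ R X X) by case: HR.
apply: idem_simple => //.
  by move=> X0; apply: nX; rewrite /is_zero_ob -dualm_id X0 dualm0.
move=> e ee.
have : dualm R e \oc dualm R e = dualm R e by rewrite -dualm_comp ee.
case/(simple_idem abelianM sX) => h.
  by left; rewrite -(dualmK e) h -(dualm0 X X) dualmK.
by right; rewrite -(dualmK e) h -(dualm_id X) dualmK.
Qed.

(* Schur's lemma applied to the component of coev_Z at a simple summand of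
   Z (x) Z^* on which it is nonzero yields a splitting, so the epsilon in [ev]
   is taken over a nonempty set. *)
Lemma ev_coev Z :
  (forall Z : M, semisimple_ob Z) -> simple I -> ~ is_zero_ob Z^* ->
  ev R Z \oc coev R Z = idm I.
Proof.
move=> semisimpleM simpleI nZ.
apply: (epsilon_spec (inhabits 0)
  (fun e : hom (ten Z Z^*) I => e \oc coev R Z = idm I)).
have [n [S [i [p [simpleS _ _ sum_ip]]]]] := semisimpleM (ten Z Z^*).
have [j pj_neq0] : exists j, p j \oc coev R Z != 0.
  apply/existsP; move: (coev_neq0 nZ); apply: contraR.
  rewrite negb_exists => /forallP pc0.
  rewrite -(comp1m (coev R Z)) -sum_ip comp_suml; apply/eqP; apply: big1 => j _.
  by rewrite -compA (eqP (negPn (pc0 j))) compm0.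
have [g [g1 _]] := schur abelianM simpleI (simpleS j) pj_neq0.
by exists (g \oc p j); rewrite -compA.
Qed.

End RCategoryTheory.

Section SimpleObject.
Variables (k : fieldType) (C : WeaklyFusion k) (X : C).
Hypothesis simpleX : simple X.
Let HM := wf_monoidal C.
Let HR := wf_rcat C.
Let abelianC := wf_abelian C.
Let R := wR C.
Let D := dual R X.
Let c0 := coev R X.

Let semisimpleC : forall Z : C, semisimple_ob Z.
Proof. by case: (wf_finss C). Qed.

Let simpleD : simple D.
Proof. exact: dual_simple. Qed.

Let simpleDD : simple (dual R D).
Proof. exact: dual_simple. Qed.

Let simple_lstar : simple (lstar R X).
Proof.
apply: (simple_of_dual HM HR abelianC) => //.
by case: HR => _ _ _ _ /(_ X) [etaK etaiK]; apply: iso_simple simpleX etaiK etaK.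
Qed.

Lemma rigid_left_dual_coev :
  has_rigid_left_dual X -> exists d, zig c0 d = idm X /\ zag c0 d = idm D.
Proof.
move=> [X' [c [d [zig1 _]]]].
have c_factor : tenm (idm X) (rphi R c) \oc c0 = c by rewrite -(rpsiE HR) (rphiK HR).
have zig1' : zig c0 (d \oc tenm (rphi R c) (idm X)) = idm X.
  by rewrite -(zig_comp_coev HM) c_factor.
by exists (d \oc tenm (rphi R c) (idm X)); split => //; apply: zig1_zag1.
Qed.

Lemma Phi1_iso_rigid : is_iso (Phi1 X) -> has_rigid_left_dual X.
Proof.
move=> [psi [_ Phi1_psi]].
have zag1 : zag c0 (e_lstar X \oc tenm psi (idm X)) = idm D by rewrite (zag_natural HM).
exact: rigid_left_dual_zigzag (zag1_zig1 _ _ _ _ zag1) zag1.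
Qed.

Lemma Phi2_iso_rigid : is_iso (Phi2 X) -> has_rigid_left_dual X.
Proof.
move=> [psi [_ Phi2_psi]].
have zig1 : zig c0 (ev R D \oc tenm (idm D) psi) = idm X by rewrite (zig_natural HM).
exact: rigid_left_dual_zigzag zig1 (zig1_zag1 _ _ _ _ zig1).
Qed.

Let ev_coev_simple Z : simple (dual R Z) -> ev R Z \oc coev R Z = idm (one C).
Proof.
by move=> [nZ _]; have := ev_coev HM HR abelianC semisimpleC (wf_unit_simple C) nZ.
Qed.

Let ev_neq0 Z : simple (dual R Z) -> ev R Z != 0.
Proof.
move=> /ev_coev_simple ev_split; apply/eqP => ev0; have [nI _] := wf_unit_simple C.
by apply: nI; rewrite /is_zero_ob -ev_split ev0 comp0m.
Qed.

Lemma ev_lstar : ev R (lstar R X) = e_lstar X \oc tenm (idm _) (eta R X).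
Proof.
rewrite /e_lstar -compA -(tenmMr HM).
by case: HR => _ _ _ _ /(_ X) [-> _]; rewrite tenm11 // compm1.
Qed.

Lemma rigid_Phi1_neq0 : has_rigid_left_dual X -> Phi1 X != 0.
Proof.
move=> /rigid_left_dual_coev [d [zig1 _]]; apply/eqP => Phi1_0.
have : d \oc tenm (Phi1 X) (idm X) = e_lstar X.
  by rewrite (zigzag_slide HM) zig1 tenm11 // compm1.
rewrite Phi1_0 (tenm0l HM) compm0 => e_lstar0.
have /eqP[] := ev_neq0 (dual_simple HM HR abelianC simple_lstar semisimpleC).
by rewrite ev_lstar -e_lstar0 comp0m.
Qed.

Lemma rigid_Phi2_neq0 : has_rigid_left_dual X -> Phi2 X != 0.
Proof.
move=> /rigid_left_dual_coev [d [_ zag1]]; apply/eqP => Phi2_0.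
have : ev R D \oc tenm (zag c0 d) (idm (dual R D)) = d \oc tenm (idm D) (Phi2 X).
  exact: zigzag_slide.
rewrite zag1 tenm11 // compm1 Phi2_0 (tenm0r HM) compm0 => evD0.
by have /eqP[] := ev_neq0 simpleDD.
Qed.

Lemma Phi1_neq0_iso : Phi1 X != 0 -> is_iso (Phi1 X).
Proof. exact: schur. Qed.

Lemma Phi2_neq0_iso : Phi2 X != 0 -> is_iso (Phi2 X).
Proof. exact: schur. Qed.

End SimpleObject.

Theorem lemma2p7 (k : closedFieldType) (C : WeaklyFusion k) (X : C) :
  simple X ->
  [/\ has_rigid_left_dual X <-> is_iso (Phi1 X),
      has_rigid_left_dual X <-> Phi1 X != 0,
      has_rigid_left_dual X <-> is_iso (Phi2 X)
    & has_rigid_left_dual X <-> Phi2 X != 0].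
Proof.
move=> simpleX.
have rig_Phi1 := rigid_Phi1_neq0 simpleX; have Phi1_rig := Phi1_iso_rigid simpleX.
have rig_Phi2 := rigid_Phi2_neq0 simpleX; have Phi2_rig := Phi2_iso_rigid simpleX.
have Phi1_iso := Phi1_neq0_iso simpleX; have Phi2_iso := Phi2_neq0_iso simpleX.
split; split.
- by move/rig_Phi1/Phi1_iso.
- exact: Phi1_rig.
- exact: rig_Phi1.
- by move/Phi1_iso/Phi1_rig.
- by move/rig_Phi2/Phi2_iso.
- exact: Phi2_rig.
- exact: rig_Phi2.
- by move/Phi2_iso/Phi2_rig.
Qed.
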